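(* Let $K$ be a field, $A=\{\alpha_1,\dots,\alpha_m\}\subset K$ and $B=\{\beta_1,\dots,\beta_n\}\subset K$ finite sets with $|A|=m$, $|B|=n$, $f=\prod_{i=1}^m(x-\alpha_i)$, $g=\prod_{j=1}^n(x-\beta_j)$. Let $0\le d\le n-1$ with $d\le m$. Then $$\operatorname{Syl}_{0,d}(A,B)=\operatorname{Sres}_d(f,g).$$
   Context: For finite sets $Y,Z$, $\mathcal{R}(Y,Z):=\prod_{y\in Y,z\in Z}(y-z)$ (equal to $1$ if $Y$ or $Z$ is empty), and $\mathcal{R}(x,Z):=\mathcal{R}(\{x\},Z)$. For $0\le p\le m$, $0\le q\le n$, $$\operatorname{Syl}_{p,q}(A,B)(x):=\sum_{\substack{A'\subset A,\ B'\subset B\\ |A'|=p,\ |B'|=q}}\mathcal{R}(A',B')\,\mathcal{R}(A\setminus A',B\setminus B')\,\frac{\mathcal{R}(x,A')\,\mathcal{R}(x,B')}{\mathcal{R}(A',A\setminus A')\,\mathcal{R}(B',B\setminus B')}.$$ Write $f=\sum_{i=0}^m f_ix^i$, $g=\sum_{i=0}^ng_ix^i$ with $f_i=g_i=0$ outside the natural ranges. For $d\le\min\{m,n\}$ if $m\ne n$, or $d<m=n$, the $d$-th subresultant $\operatorname{Sres}_d(f,g)(x)$ is the determinant of the $(m+n-2d)\times(m+n-2d)$ matrix with rows $x^jf(x)$ for $j=n-d-1,\dots,0$ followed by rows $x^jg(x)$ for $j=m-d-1,\dots,0$, where the row corresponding to a polynomial $h=x^jf$ or $x^jg$ has as its first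 $m+n-2d-1$ entries the coefficients of $x^{m+n-d-1},x^{m+n-d-2},\dots,x^{d+1}$ in $h$, and as last entry the polynomial $h(x)$ itself. *)

From HB Require Import structures.
From mathcomp Require Import all_boot all_order all_algebra.
Set Implicit Arguments. Unset Strict Implicit. Unset Printing Implicit Defensive.
Import GRing.Theory.
Local Open Scope ring_scope.

(* Finite sets A = {a_0..a_(m-1)} are given by injective families a : 'I_m -> K;
   subsets A' of A are encoded by index subsets I : {set 'I_m}. *)

Definition Rset (K : fieldType) (m n : nat) (a : 'I_m -> K) (b : 'I_n -> K)
  (I : {set 'I_m}) (J : {set 'I_n}) : K :=
  \prod_(i in I) \prod_(j in J) (a i - b j).

Definition Rx (K : fieldType) (m : nat) (a : 'I_m -> K) (I : {set 'I_m}) : {poly K} :=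
  \prod_(i in I) ('X - (a i)%:P).

Definition Syl (K : fieldType) (m n : nat) (a : 'I_m -> K) (b : 'I_n -> K)
  (p q : nat) : {poly K} :=
  \sum_(I : {set 'I_m} | #|I| == p) \sum_(J : {set 'I_n} | #|J| == q)
    ((Rset a b I J * Rset a b (~: I) (~: J))
       / (Rset a a I (~: I) * Rset b b J (~: J))) *: (Rx a I * Rx b J).

Definition Sres (K : fieldType) (d : nat) (f g : {poly K}) : {poly K} :=
  let m := (size f).-1 in
  let n := (size g).-1 in
  let N := (m + n - d.*2)%N in
  let h (i : nat) : {poly K} :=
    if (i < n - d)%N then 'X^(n - d - 1 - i) * f
    else 'X^(m - d - 1 - (i - (n - d))) * g in
  \det (\matrix_(i < N, j < N)
          (if (j < N - 1)%N then ((h i)`_(m + n - d - 1 - j))%:P else h i)).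

(* Over K[x], let r_0, ..., r_(M-1), M = m + n - d, be the polynomials in a new variable Y
   given by (Y - x) Y^e for e < d, then Y^(n-d-1-i) f(Y), then Y^(m-d-1-i) g(Y).  For any two
   families psi, phi of M linear forms on polynomials of size at most M, the matrices
   [psi_j(r_i)] and [phi_j(r_i)] both factor through the coefficient matrix of the r_i, hence
   det [psi_j(r_i)] * det [phi_j(Y^i)] = det [phi_j(r_i)] * det [psi_j(Y^i)].
   With psi the coefficients of Y^1, ..., Y^d, the coefficients read by the columns of the
   subresultant matrix and the evaluation at Y = x, det [psi_j(r_i)] is Sres_d(f, g).  With phi
   the evaluations at the roots of g followed by the remaining coefficients, det [phi_j(Y^i)]
   is the Vandermonde determinant of B, and det [phi_j(r_i)] expands, by multilinearity in the
   rows, over the d-subsets J of B into products of Vandermonde determinants: these are the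
   terms of Syl_(0,d)(A, B), each multiplied by the Vandermonde determinant of B. *)

From HB Require Import structures.
From mathcomp Require Import all_boot all_order all_algebra.
From mathcomp Require Import perm ring zify.
Set Implicit Arguments. Unset Strict Implicit. Unset Printing Implicit Defensive.
Import GRing.Theory.
Local Open Scope ring_scope.

Section NatIndexedMatrices.
Variable R : comNzRingType.

Definition nat_mx n (E : nat -> nat -> R) : 'M[R]_n := \matrix_(i < n, j < n) E i j.

Lemma eq_nat_mx n E E' : (forall i j, (i < n)%N -> (j < n)%N -> E i j = E' i j) ->
  nat_mx n E = nat_mx n E'.
Proof. by move=> eqE; apply/matrixP=> i j; rewrite !mxE eqE. Qed.

Lemma det_nat_mx_cast n n' E : n = n' -> \det (nat_mx n E) = \det (nat_mx n' E).
Proof. by move->. Qed.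

Lemma det_nat_mx_tr n E : \det (nat_mx n E) = \det (nat_mx n (fun i j => E j i)).
Proof. by rewrite -det_tr; congr (\det _); apply/matrixP=> i j; rewrite !mxE. Qed.

Lemma det_lblockE a b (A : 'M[R]_(a + b)) :
  ursubmx A = 0 -> \det A = \det (ulsubmx A) * \det (drsubmx A).
Proof. by move=> A_ur0; rewrite -{1}[A]submxK A_ur0 det_lblock. Qed.

Lemma det_ublockE a b (A : 'M[R]_(a + b)) :
  dlsubmx A = 0 -> \det A = \det (ulsubmx A) * \det (drsubmx A).
Proof. by move=> A_dl0; rewrite -{1}[A]submxK A_dl0 det_ublock. Qed.

Lemma det_nat_mx_lblock a b E :
  (forall i j, (i < a)%N -> (a <= j < a + b)%N -> E i j = 0) ->
  \det (nat_mx (a + b) E) =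
  \det (nat_mx a E) * \det (nat_mx b (fun i j => E (a + i) (a + j))%N).
Proof.
move=> E_ur0; rewrite det_lblockE; last first.
  apply/matrixP=> i j; rewrite !mxE E_ur0 //=.
  by rewrite leq_addr ltn_add2l ltn_ord.
by congr (_ * _); congr (\det _); apply/matrixP=> i j; rewrite !mxE.
Qed.

Lemma det_nat_mx_ublock a b E :
  (forall i j, (a <= i < a + b)%N -> (j < a)%N -> E i j = 0) ->
  \det (nat_mx (a + b) E) =
  \det (nat_mx a E) * \det (nat_mx b (fun i j => E (a + i) (a + j))%N).
Proof.
move=> E_dl0; rewrite det_ublockE; last first.
  apply/matrixP=> i j; rewrite !mxE E_dl0 //=.
  by rewrite leq_addr ltn_add2l ltn_ord.
by congr (_ * _); congr (\det _); apply/matrixP=> i j; rewrite !mxE.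
Qed.

End NatIndexedMatrices.

Section LinearFunctionals.
Variable R : comNzRingType.
Implicit Types (psi : {poly R} -> R) (p : {poly R}).

Lemma linear_poly_expand psi n p : linear_for *%R psi -> (size p <= n)%N ->
  psi p = \sum_(e < n) p`_e * psi 'X^e.
Proof.
move=> psi_lin size_p.
have p_expand : p = \sum_(e < n) p`_e *: 'X^e.
  rewrite -poly_def; apply/polyP=> k; rewrite coef_poly.
  by case: ltnP => // le_nk; rewrite nth_default // (leq_trans size_p).
have psi0 : psi 0 = 0.
  have := psi_lin 1 0 0; rewrite scale1r addr0 mul1r => psi0D.
  by apply: (@addrI _ (psi 0)); rewrite addr0 -psi0D.
rewrite {1}p_expand; apply: (big_rec2 (fun u r => psi u = r)) => [//|e u r _ <-].
by rewrite psi_lin.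
Qed.

Lemma linear_rows_mulmx M (r : nat -> {poly R}) (psi : nat -> {poly R} -> R) :
  (forall i, (i < M)%N -> (size (r i) <= M)%N) -> (forall j, linear_for *%R (psi j)) ->
  nat_mx M (fun i j => psi j (r i)) =
  nat_mx M (fun i e => (r i)`_e) *m nat_mx M (fun e j => psi j 'X^e).
Proof.
move=> size_r psi_lin; apply/matrixP=> i j.
rewrite !mxE (linear_poly_expand (psi_lin j) (size_r i (ltn_ord i))).
by apply: eq_bigr => e _; rewrite !mxE.
Qed.

Lemma det_linear_rows_cross M (r : nat -> {poly R}) (psi1 psi2 : nat -> {poly R} -> R) :
  (forall i, (i < M)%N -> (size (r i) <= M)%N) ->
  (forall j, linear_for *%R (psi1 j)) -> (forall j, linear_for *%R (psi2 j)) ->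
  \det (nat_mx M (fun i j => psi1 j (r i))) * \det (nat_mx M (fun i j => psi2 j 'X^i)) =
  \det (nat_mx M (fun i j => psi2 j (r i))) * \det (nat_mx M (fun i j => psi1 j 'X^i)).
Proof.
move=> size_r psi1_lin psi2_lin.
rewrite !(linear_rows_mulmx size_r) // !det_mulmx; ring.
Qed.

End LinearFunctionals.

Section ReversalAndVandermonde.
Variable R : comNzRingType.

Definition rev_mx n : 'M[R]_n := \matrix_(i, j) ((i + j)%N == n.-1)%:R.

Lemma det_rev_mx n : \det (rev_mx n) = (-1) ^+ 'C(n, 2).
Proof.
elim: n => [|n IHn]; first by rewrite det_mx00.
rewrite (expand_det_row _ ord0) (bigD1 ord_max) //= big1 ?addr0; last first.
  move=> j /negbTE j_neq_max; rewrite !mxE add0n /=.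
  by case: eqP => [j_max|]; [move: j_neq_max; rewrite -val_eqE /= j_max eqxx|rewrite mul0r].
rewrite !mxE add0n eqxx mul1r /cofactor.
have -> : row' ord0 (col' ord_max (rev_mx n.+1)) = rev_mx n.
  apply/matrixP=> i j; rewrite !mxE /= /bump leq0n (leqNgt n) ltn_ord add0n add1n addSn.
  by case: n i j {IHn} => [[]|n] i j //=; rewrite eqSS.
by rewrite IHn add0n -exprD binS bin1 addnC.
Qed.

Lemma mul_rev_mx n (A : 'M[R]_n) : rev_mx n *m A = \matrix_(i, j) A (rev_ord i) j.
Proof.
apply/matrixP=> i j; rewrite !mxE (bigD1 (rev_ord i)) //= big1 ?addr0.
  rewrite !mxE /=; have -> : (i + (n - i.+1) = n.-1)%N by have := ltn_ord i; lia.
  by rewrite eqxx mul1r.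
move=> l /negbTE l_neq; rewrite !mxE; case: eqP => [il|]; last by rewrite mul0r.
move: l_neq; rewrite -val_eqE /=; have := ltn_ord i; have := ltn_ord l; lia.
Qed.

Lemma det_anti_unitrig n (U : 'M[R]_n) :
  (forall i j : 'I_n, (n <= i + j)%N -> U i j = 0) ->
  (forall i j : 'I_n, (i + j)%N = n.-1 -> U i j = 1) ->
  \det U = (-1) ^+ 'C(n, 2).
Proof.
move=> U_below U_anti; have : \det (rev_mx n *m U) = 1.
  rewrite mul_rev_mx det_trig.
    by apply: big1 => i _; rewrite !mxE U_anti //=; have := ltn_ord i; lia.
  by apply/is_trig_mxP=> i j lt_ij; rewrite !mxE U_below //=; have := ltn_ord i; lia.
rewrite det_mulmx det_rev_mx => /(congr1 ( *%R ((-1) ^+ 'C(n, 2)))).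
by rewrite /= signrMK mulr1.
Qed.


Definition vdm_prod n (x : 'I_n -> R) : R :=
  \prod_(i < n) \prod_(j < n | (i < j)%N) (x j - x i).

Lemma det_powers_mx n (x : 'I_n -> R) :
  \det (\matrix_(i < n, j < n) x i ^+ j) = vdm_prod x.
Proof.
rewrite -det_tr (_ : _^T = Vandermonde n (\row_j x j)).
  by rewrite det_Vandermonde; apply: eq_bigr => i _; apply: eq_bigr => j _; rewrite !mxE.
by apply/matrixP=> i j; rewrite !mxE.
Qed.

Lemma det_rev_powers_mx n (x : 'I_n -> R) :
  \det (\matrix_(i < n, j < n) x i ^+ (n.-1 - j)) = (-1) ^+ 'C(n, 2) * vdm_prod x.
Proof.
have -> : \matrix_(i < n, j < n) x i ^+ (n.-1 - j) =
          (rev_mx n *m (\matrix_(i < n, j < n) x i ^+ j)^T)^T.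
  by apply/matrixP=> i j; rewrite mul_rev_mx !mxE /=; congr (_ ^+ _); lia.
by rewrite det_tr det_mulmx det_rev_mx det_tr det_powers_mx.
Qed.

Lemma vdm_prod_perm n (x : 'I_n -> R) (s : 'S_n) :
  vdm_prod (fun i => x (s i)) = (-1) ^+ s * vdm_prod x.
Proof.
rewrite -!det_powers_mx -det_perm -det_mulmx -row_permE.
by congr (\det _); apply/matrixP=> i j; rewrite !mxE.
Qed.

Lemma vdm_prod_split a b (x : 'I_(a + b) -> R) :
  vdm_prod x = vdm_prod (fun i => x (lshift b i)) *
    \prod_(i < a) \prod_(j < b) (x (rshift a j) - x (lshift b i)) *
    vdm_prod (fun j => x (rshift a j)).
Proof.
rewrite /vdm_prod big_split_ord /= -big_split /=; congr (_ * _).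
  apply: eq_bigr => i _; rewrite big_split_ord /=; congr (_ * _).
  by apply: eq_bigl => j /=; rewrite (leq_trans (ltn_ord i)) ?leq_addr.
apply: eq_bigr => i _; rewrite big_split_ord /= big_pred0 ?mul1r.
  by apply: eq_bigl => j /=; rewrite ltn_add2l.
by move=> j /=; rewrite ltnNge (leq_trans (ltnW (ltn_ord j))) ?leq_addr.
Qed.

End ReversalAndVandermonde.

Lemma perm_prefix n d (J : {set 'I_n}) : #|J| = d ->
  exists s : 'S_n, forall i, (s i \in J) = (i < d)%N.
Proof.
move=> cardJ; pose sq := enum J ++ enum (~: J).
have size_sq : size sq = n by rewrite size_cat -!cardE cardsC card_ord.
have uniq_sq : uniq sq.
  rewrite cat_uniq !enum_uniq /= andbT; apply/hasPn => x.
  by rewrite !mem_enum inE => /negbTE ->.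
pose F (i : 'I_n) := nth i sq i.
have F_inj : injective F.
  move=> i j; rewrite /F (set_nth_default i j) ?size_sq //.
  by move/eqP; rewrite nth_uniq ?size_sq // => /eqP /val_inj.
exists (perm F_inj) => i; rewrite permE /F nth_cat -cardE cardJ.
case: ifP => lt_id; first by rewrite -mem_enum mem_nth // -cardE cardJ.
have cardCJ : #|~: J| = (n - d)%N by rewrite cardsCs setCK card_ord cardJ.
have : nth i (enum (~: J)) (i - d) \in enum (~: J).
  by rewrite mem_nth // -cardE cardCJ; have := ltn_ord i; move: lt_id; lia.
by rewrite mem_enum inE => /negbTE.
Qed.

Section RowSplitExpansion.
Variable R : comNzRingType.

Lemma det_add_rows n (A B : 'M[R]_n) :
  \det (A + B) =
  \sum_(J : {set 'I_n}) \det (\matrix_(i, j) if i \in J then A i j else B i j).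
Proof.
rewrite /determinant.
transitivity (\sum_(s : 'S_n) \sum_(J in {set 'I_n})
  (-1) ^+ s * \prod_i (if i \in J then A i (s i) else B i (s i))).
  apply: eq_bigr => s _; rewrite -mulr_sumr -bigA_distr.
  by congr (_ * _); apply: eq_bigr => i _; rewrite mxE.
rewrite exchange_big; apply: eq_bigr => J _; apply: eq_bigr => s _.
by congr (_ * _); apply: eq_bigr => i _; rewrite mxE.
Qed.

Variables d p : nat.
Implicit Types (J : {set 'I_(d + p)}) (w v : 'I_(d + p) -> nat -> R).

Definition split_mx J w v : 'M[R]_(d + p) :=
  \matrix_(k, j) if k \in J then (if (j < d)%N then w k j else 0)
                 else (if (j < d)%N then 0 else v k (j - d)%N).

(* Scaling the first d columns or the rows in J by 'X both turn split_mx into the same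
   matrix, so its determinant satisfies D 'X^d = 'X^#|J| D. *)
Lemma det_split_mx_eq0 J w v : #|J| != d -> \det (split_mx J w v) = 0.
Proof.
move=> cardJ; set N := split_mx J w v.
pose N2 := map_mx (@polyC R) N.
pose Dc := diag_mx (\row_(j < d + p) (if (j < d)%N then 'X else 1 : {poly R})).
pose Dr := diag_mx (\row_(k < d + p) (if k \in J then 'X else 1 : {poly R})).
have N2_comm : N2 *m Dc = Dr *m N2.
  apply/matrixP=> k j; rewrite mul_mx_diag mul_diag_mx !mxE.
  by case: (k \in J); case: (j < d)%N; rewrite ?rmorph0 ?mulr0 ?mul0r ?mulr1 ?mul1r // mulrC.
have := congr1 determinant N2_comm; rewrite !det_mulmx !det_diag det_map_mx.
have -> : \prod_(i < d + p) (\row_(j < d + p) (if (j < d)%N then 'X else 1 : {poly R})) 0 i = 'X^d.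
  rewrite big_split_ord /= [X in _ * X]big1 ?mulr1; last first.
    by move=> i _; rewrite !mxE /= ltnNge leq_addr.
  rewrite (eq_bigr (fun _ => 'X)) ?prodr_const ?card_ord // => i _.
  by rewrite !mxE /= ltn_ord.
have -> : \prod_(i < d + p) (\row_(k < d + p) (if k \in J then 'X else 1 : {poly R})) 0 i = 'X^#|J|.
  rewrite (eq_bigr (fun i => if i \in J then 'X else 1)); last by move=> i _; rewrite !mxE.
  by rewrite -big_mkcond prodr_const.
move/(congr1 (fun P : {poly R} => P`_d)).
rewrite coefCM coefXn eqxx mulr1 mulrC coefCM coefXn.
by rewrite eq_sym (negbTE cardJ) mulr0.
Qed.

Lemma det_split_expand (y c : 'I_(d + p) -> R) w v :
  \det (\matrix_(k, j) if (j < d)%N then y k * w k j else c k * v k (j - d)%N) =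
  \sum_(J : {set 'I_(d + p)} | #|J| == d)
    (\prod_(k in J) y k) * (\prod_(k in ~: J) c k) * \det (split_mx J w v).
Proof.
pose A : 'M[R]_(d + p) := \matrix_(k, j) if (j < d)%N then y k * w k j else 0.
pose B : 'M[R]_(d + p) := \matrix_(k, j) if (j < d)%N then 0 else c k * v k (j - d)%N.
rewrite (_ : \matrix_(k, j) _ = A + B); last first.
  by apply/matrixP=> k j; rewrite !mxE; case: (j < d)%N; rewrite ?addr0 ?add0r.
rewrite det_add_rows [RHS]big_mkcond /=; apply: eq_bigr => J _.
rewrite (_ : \matrix_(i, j) _ = diag_mx (\row_k (if k \in J then y k else c k)) *m split_mx J w v).
  case: eqP => [_|/eqP cardJ]; last by rewrite det_mulmx det_split_mx_eq0 // mulr0.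
  rewrite det_mulmx det_diag (bigID (mem J)) /=; congr (_ * _ * _).
    by apply: eq_bigr => k kJ; rewrite !mxE kJ.
  by apply: eq_big => [k|k /negbTE kJ]; rewrite ?inE // !mxE kJ.
apply/matrixP=> k j; rewrite mul_diag_mx !mxE.
by case: (k \in J); case: (j < d)%N; rewrite ?mulr0.
Qed.

Lemma prod_perm_lshift (J : {set 'I_(d + p)}) (s : 'S_(d + p)) (F : 'I_(d + p) -> R) :
  (forall i, (s i \in J) = (i < d)%N) ->
  \prod_(i < d) F (s (lshift p i)) = \prod_(k in J) F k.
Proof.
move=> sJ; rewrite [RHS](reindex_inj (@perm_inj _ s)) /=.
rewrite (eq_bigl (fun i : 'I_(d + p) => (i < d)%N)) //.
rewrite big_split_ord /= [X in _ * X]big_pred0 ?mulr1; last by move=> i; rewrite ltnNge leq_addr.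
by apply: eq_bigl => i; rewrite ltn_ord.
Qed.

Lemma prod_perm_rshift (J : {set 'I_(d + p)}) (s : 'S_(d + p)) (F : 'I_(d + p) -> R) :
  (forall i, (s i \in J) = (i < d)%N) ->
  \prod_(i < p) F (s (rshift d i)) = \prod_(k in ~: J) F k.
Proof.
move=> sJ; rewrite [RHS](reindex_inj (@perm_inj _ s)) /=.
rewrite (eq_bigl (fun i : 'I_(d + p) => ~~ (i < d)%N)) => [|i]; last by rewrite inE sJ.
rewrite big_split_ord /= [X in X * _]big_pred0 ?mul1r; last by move=> i; rewrite ltn_ord.
by apply: eq_bigl => i; rewrite ltnNge leq_addr.
Qed.

Lemma det_split_mx_powers (x : 'I_(d + p) -> R) (J : {set 'I_(d + p)}) : #|J| = d ->
  \det (split_mx J (fun k j => x k ^+ j) (fun k j => x k ^+ (p.-1 - j))) *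
  \prod_(k in ~: J) \prod_(l in J) (x k - x l) = (-1) ^+ 'C(p, 2) * vdm_prod x.
Proof.
move=> cardJ; have [s sJ] := perm_prefix cardJ.
set N := split_mx _ _ _.
have det_sN : (-1) ^+ s * \det N = vdm_prod (fun i => x (s (lshift p i))) *
    ((-1) ^+ 'C(p, 2) * vdm_prod (fun j => x (s (rshift d j)))).
  rewrite -det_perm -det_mulmx -row_permE det_lblockE; last first.
    by apply/matrixP=> i j; rewrite !mxE sJ /= ltn_ord ltnNge leq_addr.
  rewrite -det_powers_mx -det_rev_powers_mx.
  congr (_ * _); congr (\det _); apply/matrixP=> i j; rewrite !mxE sJ /= ?ltn_ord //.
  by rewrite ltnNge leq_addr /= ltnNge leq_addr /= addKn.
have cross : \prod_(i < d) \prod_(j < p) (x (s (rshift d j)) - x (s (lshift p i))) =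
             \prod_(k in ~: J) \prod_(l in J) (x k - x l).
  rewrite (prod_perm_lshift (fun l => \prod_(j < p) (x (s (rshift d j)) - x l)) sJ) exchange_big /=.
  exact: (prod_perm_rshift (fun k => \prod_(l in J) (x k - x l)) sJ).
have := vdm_prod_perm x s; rewrite vdm_prod_split cross => vdm_s.
rewrite -[\det N](signrMK s) det_sN -[vdm_prod x](signrMK s) -vdm_s.
move: ((-1) ^+ s) ((-1) ^+ 'C(p, 2)) => sgn_s sgn_p; ring.
Qed.

End RowSplitExpansion.

Lemma size_prod_ord_XsubC (R : idomainType) n (a : 'I_n -> R) :
  size (\prod_(i < n) ('X - (a i)%:P)) = n.+1.
Proof.
rewrite size_prod => [|i _]; last by rewrite polyXsubC_eq0.
rewrite (eq_bigr (fun _ => 2%N)) => [|i _]; last by rewrite size_XsubC.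
by rewrite sum_nat_const card_ord; lia.
Qed.

Lemma hornerX_map_polyC (R : nzRingType) (h : {poly R}) : (h ^:P).['X] = h.
Proof.
rewrite horner_coef size_map_polyC -[RHS]coefK poly_def.
by apply: eq_bigr => i _; rewrite coef_map /= mul_polyC.
Qed.

Lemma Syl0E (K : fieldType) m n (a : 'I_m -> K) (b : 'I_n -> K) k :
  Syl a b 0 k = \sum_(J : {set 'I_n} | #|J| == k)
                  (Rset a b setT (~: J) / Rset b b J (~: J)) *: Rx b J.
Proof.
rewrite /Syl (big_pred1 set0) => [|I]; last by rewrite cards_eq0.
apply: eq_bigr => J _; rewrite setC0 /Rset /Rx !big_set0 !mul1r.
by congr ((_ / _) *: _); apply: eq_bigl => i; rewrite in_setT.
Qed.

Lemma bin2D a b : 'C(a + b, 2) = ('C(a, 2) + 'C(b, 2) + a * b)%N.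
Proof.
elim: b => [|b IHb]; first by rewrite addn0 bin0n muln0 !addn0.
by rewrite addnS binS IHb bin1 binS bin1 mulnS; ring.
Qed.

Lemma sres_sign_odd d p q :
  ~~ odd (d + (d + q) * p + p * d + 'C(p, 2) + ('C(q, 2) + (d + 'C(p + q, 2)))).
Proof.
rewrite bin2D (_ : _ + _ = 2 * ('C(p, 2) + 'C(q, 2) + p * q + d + d * p))%N; last by ring.
by rewrite oddM.
Qed.

Section SubresultantAsSylvesterSum.
Variable K : fieldType.
Variables d p q : nat.
Hypothesis p_gt0 : (0 < p)%N.
Variable alpha : 'I_(d + q) -> K.
Variable beta : 'I_(d + p) -> K.
Hypothesis beta_inj : injective beta.

Local Notation f := (\prod_(i < d + q) ('X - (alpha i)%:P)).
Local Notation g := (\prod_(j < d + p) ('X - (beta j)%:P)).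
Local Notation M := (d + p + q)%N.

Lemma coef_g_top : g`_(d + p) = 1.
Proof.
have /monicP := monic_prod_XsubC (index_enum 'I_(d + p)) predT beta.
by rewrite /lead_coef size_prod_ord_XsubC.
Qed.

Lemma g_root (k : 'I_(d + p)) : g.[beta k] = 0.
Proof. by rewrite horner_prod (bigD1 k) //= hornerXsubC subrr mul0r. Qed.

Lemma f_at_beta (k : 'I_(d + p)) : f.[beta k] = \prod_(i < d + q) (beta k - alpha i).
Proof. by rewrite horner_prod; apply: eq_bigr => i _; rewrite hornerXsubC. Qed.

(* Polynomials in Y over K[x]: the outer 'X is Y and 'X%:P is x. *)
Definition sres_rowpoly (e : nat) : {poly {poly K}} :=
  if (e < d)%N then ('X - 'X%:P) * 'X^e
  else if (e < d + p)%N then ('X^(p.-1 - (e - d)) * f) ^:P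
  else ('X^(q.-1 - (e - d - p)) * g) ^:P.

Definition sres_coord (j : nat) : {poly {poly K}} -> {poly K} :=
  if (j < d)%N then coefp j.+1
  else if (j < M.-1)%N then coefp (M.-1 - (j - d))
  else horner_eval 'X.

Definition beta_nat (k : nat) : K := if insub k is Some i then beta i else 0.

Definition root_coord (j : nat) : {poly {poly K}} -> {poly K} :=
  if (j < d + p)%N then horner_eval (beta_nat j)%:P else coefp j.

Lemma beta_natE (k : 'I_(d + p)) : beta_nat k = beta k.
Proof. by rewrite /beta_nat valK. Qed.

Lemma size_sres_rowpoly e : (e < M)%N -> (size (sres_rowpoly e) <= M)%N.
Proof.
move=> lt_eM; rewrite /sres_rowpoly; case: ifP => lt_ed.
  by rewrite (leq_trans (size_polyMleq _ _)) // size_XsubC size_polyXn; lia.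
case: ifP => lt_edp; rewrite size_map_polyC (leq_trans (size_polyMleq _ _)) //.
  by rewrite size_polyXn size_prod_ord_XsubC; lia.
by rewrite size_polyXn size_prod_ord_XsubC; lia.
Qed.

Lemma sres_coord_linear j : linear_for *%R (sres_coord j).
Proof.
move=> c u v; rewrite /sres_coord /horner_eval /coefp.
by case: ifP => _; [|case: ifP => _]; rewrite ?coefD ?coefZ ?hornerD ?hornerZ.
Qed.

Lemma root_coord_linear j : linear_for *%R (root_coord j).
Proof.
move=> c u v; rewrite /root_coord /horner_eval /coefp.
by case: ifP => _; rewrite ?coefD ?coefZ ?hornerD ?hornerZ.
Qed.

Lemma Sres_nat_mx : Sres d f g = \det (nat_mx (p + q) (fun i j =>
   let h := if (i < p)%N then 'X^(p.-1 - i) * f else 'X^(q.-1 - (i - p)) * g in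
   if (j < (p + q).-1)%N then (h`_(M.-1 - j))%:P else h)).
Proof.
rewrite /Sres !size_prod_ord_XsubC /=.
have -> : (d + q + (d + p) - d.*2 = p + q)%N by rewrite -addnn; lia.
have -> : (d + q + (d + p) - d - 1 = M.-1)%N by lia.
by rewrite !addKn !subn1.
Qed.

Lemma det_sres_coord_rows :
  \det (nat_mx M (fun i j => sres_coord j (sres_rowpoly i))) = Sres d f g.
Proof.
have coef_lin e k : ((('X - 'X%:P) * 'X^e : {poly {poly K}})`_k) =
    (k == e.+1)%:R - 'X * (k == e)%:R.
  by rewrite mulrBl coefB -exprS coefXn coefCM coefXn.
rewrite Sres_nat_mx (det_nat_mx_cast _ (esym (addnA d p q))) det_nat_mx_lblock; last first.
  move=> i j lt_id /andP[le_dj lt_jM]; rewrite /sres_coord /sres_rowpoly lt_id ltnNge le_dj /=.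
  case: ifP => lt_jM1; last by rewrite /horner_eval hornerM hornerXsubC subrr mul0r.
  by rewrite /coefp coef_lin; do 2 (case: eqP; [lia|move=> _]); rewrite mulr0 subr0.
rewrite [X in X * _](_ : _ = 1) ?mul1r; last first.
  rewrite det_trig; last first.
    apply/is_trig_mxP=> i j lt_ij; rewrite mxE /sres_coord /sres_rowpoly !ltn_ord /coefp coef_lin.
    by do 2 (case: eqP; [lia|move=> _]); rewrite mulr0 subr0.
  apply: big1 => i _; rewrite mxE /sres_coord /sres_rowpoly !ltn_ord /coefp coef_lin eqxx.
  by case: eqP; [lia|rewrite mulr0 subr0].
congr (\det _); apply: eq_nat_mx => i j lt_ipq lt_jpq.
rewrite /sres_coord /sres_rowpoly !ltnNge !leq_addr /= !addKn -!ltnNge.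
have -> : (d + j < M.-1)%N = (j < (p + q).-1)%N by lia.
have -> : (d + i < d + p)%N = (i < p)%N by lia.
case: ifP => _; case: ifP => _; rewrite /coefp /horner_eval ?coef_map ?hornerX_map_polyC //=.
Qed.

Lemma det_root_coord_monomials :
  \det (nat_mx M (fun i j => root_coord j 'X^i)) = vdm_prod (fun k => (beta k)%:P).
Proof.
rewrite det_nat_mx_lblock; last first.
  move=> i j lt_i /andP[le_j _]; rewrite /root_coord ltnNge le_j /= /coefp coefXn.
  by case: eqP => // ji; move: lt_i; rewrite -ji ltnNge le_j.
rewrite [X in _ * X](_ : _ = 1) ?mulr1; last first.
  rewrite -(det1 _ q); congr (\det _); apply/matrixP=> i j.
  by rewrite !mxE /root_coord ltnNge leq_addr /= /coefp coefXn eqn_add2l eq_sym.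
rewrite det_nat_mx_tr -det_powers_mx; congr (\det _); apply/matrixP=> i j.
by rewrite !mxE /root_coord ltn_ord /horner_eval hornerXn beta_natE.
Qed.

Lemma det_root_coord_rows :
  \det (nat_mx M (fun i j => root_coord j (sres_rowpoly i))) =
  \det (nat_mx (d + p) (fun i j => root_coord j (sres_rowpoly i))) * (-1) ^+ 'C(q, 2).
Proof.
rewrite det_nat_mx_ublock; last first.
  move=> i j /andP[le_i _] lt_j; have le_di := leq_trans (leq_addr p d) le_i.
  rewrite /root_coord lt_j /sres_rowpoly !ltnNge le_i le_di /=.
  by rewrite /horner_eval horner_map hornerM -[j]/(Ordinal lt_j : nat) beta_natE g_root mulr0.
congr (_ * _); apply: det_anti_unitrig => i k ik_bound; rewrite !mxE /root_coord ltnNge leq_addr /=.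
all: rewrite /sres_rowpoly ltnNge (leq_trans (leq_addr p d)) ?leq_addr //= ltnNge leq_addr /=.
all: rewrite /coefp coef_map /= coefXnM; case: ifP => [|_]; first lia.
  by rewrite nth_default ?size_prod_ord_XsubC //; have := ltn_ord i; lia.
have -> : (d + p + k - (q.-1 - (d + p + i - d - p)) = d + p)%N by have := ltn_ord i; lia.
by rewrite coef_g_top.
Qed.

Lemma det_sres_coord_monomials :
  \det (nat_mx M (fun i j => sres_coord j 'X^i)) = (-1) ^+ (d + 'C(p + q, 2)).
Proof.
have [n Mn] : exists n, M = n.+1 by exists M.-1; lia.
have sres_coordE j : sres_coord j = if (j < d)%N then coefp j.+1
    else if (j < n)%N then coefp (n - (j - d)) else horner_eval 'X.
  by rewrite /sres_coord Mn.
rewrite (det_nat_mx_cast _ Mn) (expand_det_row _ ord0) (bigD1 ord_max) //= big1 ?addr0; last first.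
  move=> j /negbTE j_neq_max; rewrite !mxE -[nat_of_ord ord0]/0%N sres_coordE.
  have lt_jn : (j < n)%N.
    by move: j_neq_max; rewrite -val_eqE /= ltn_neqAle -ltnS ltn_ord andbT => ->.
  case: ifP => _; [|case: ifP => [_|]; last by rewrite lt_jn];
    by rewrite /coefp coefXn; case: eqP => [?|_]; rewrite ?mul0r //; lia.
rewrite !mxE -[nat_of_ord ord0]/0%N -[nat_of_ord ord_max]/n sres_coordE ltnn ifF; last by lia.
rewrite /horner_eval expr0 hornerC mul1r /cofactor add0n.
have -> : row' ord0 (col' ord_max (nat_mx n.+1 (fun i j => sres_coord j 'X^i))) =
          nat_mx n (fun i j => sres_coord j 'X^(i.+1)).
  by apply/matrixP=> i j; rewrite !mxE /= /bump leqNgt ltn_ord.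
have nE : n = (d + (p + q).-1)%N by lia.
rewrite (det_nat_mx_cast _ nE) det_nat_mx_lblock; last first.
  move=> i j lt_id /andP[le_dj lt_jn]; rewrite sres_coordE ltnNge le_dj /= ifT; last by lia.
  by rewrite /coefp coefXn; case: eqP => //; lia.
rewrite [\det (nat_mx d _)](_ : _ = 1) ?mul1r; last first.
  rewrite -(det1 _ d); congr (\det _); apply/matrixP=> i j.
  by rewrite !mxE sres_coordE ltn_ord /coefp coefXn eqSS eq_sym.
rewrite (det_anti_unitrig (n := (p + q).-1)) => [|i j le_ij|i j ij_anti].
- have [r pqr] : exists r, (p + q)%N = r.+1 by exists (p + q).-1; lia.
  by rewrite -exprD -[nat_of_ord ord_max]/n nE pqr /= binS bin1; congr (_ ^+ _); lia.
- rewrite mxE sres_coordE ltnNge leq_addr /= ifT; last by have := ltn_ord j; lia.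
  by rewrite /coefp coefXn; case: eqP => // ?; lia.
rewrite mxE sres_coordE ltnNge leq_addr /= ifT; last by have := ltn_ord j; lia.
by rewrite /coefp coefXn; case: eqP => // []; have := ltn_ord i; lia.
Qed.

Definition beta_split_mx (J : {set 'I_(d + p)}) : 'M[{poly K}]_(d + p) :=
  split_mx J (fun k j => (beta k)%:P ^+ j) (fun k j => (beta k)%:P ^+ (p.-1 - j)).

Lemma det_root_coord_rows_expand :
  \det (nat_mx (d + p) (fun i j => root_coord j (sres_rowpoly i))) =
  \sum_(J : {set 'I_(d + p)} | #|J| == d)
     (\prod_(k in J) ((beta k)%:P - 'X)) * (\prod_(k in ~: J) (f.[beta k])%:P) *
     \det (beta_split_mx J).
Proof.
rewrite det_nat_mx_tr -det_split_expand; congr (\det _); apply/matrixP=> k j.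
rewrite !mxE /root_coord ltn_ord beta_natE /sres_rowpoly /horner_eval; case: ifP => _.
  by rewrite hornerM hornerXsubC hornerXn.
by rewrite ltn_ord horner_map /= hornerM hornerXn rmorphM rmorphXn mulrC.
Qed.

Lemma Rset_beta_neq0 (J : {set 'I_(d + p)}) : Rset beta beta J (~: J) != 0.
Proof.
apply/prodf_neq0 => k kJ; apply/prodf_neq0 => l; rewrite inE => lJ.
by rewrite subr_eq0 (inj_eq beta_inj); apply: contraNneq lJ => <-.
Qed.

Lemma vdm_beta_neq0 : vdm_prod (fun k => (beta k)%:P) != 0.
Proof.
apply/prodf_neq0 => i _; apply/prodf_neq0 => j lt_ij.
by rewrite subr_eq0 (inj_eq polyC_inj) (inj_eq beta_inj) -val_eqE neq_ltn lt_ij orbT.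
Qed.

Section ComplementOfSizeD.
Variable J : {set 'I_(d + p)}.
Hypothesis cardJ : #|J| = d.

Lemma card_setC_split : #|~: J| = p.
Proof. by rewrite cardsCs setCK card_ord cardJ addKn. Qed.

Lemma prod_beta_subX : \prod_(k in J) ((beta k)%:P - 'X) = (-1) ^+ d * Rx beta J.
Proof.
rewrite /Rx -[d in (-1) ^+ d]cardJ -prodrN.
by apply: eq_bigr => k _; rewrite opprB.
Qed.

Lemma prod_f_at_beta : \prod_(k in ~: J) (f.[beta k])%:P =
  ((-1) ^+ ((d + q) * p) * Rset alpha beta setT (~: J))%:P.
Proof.
rewrite -rmorph_prod; congr (_%:P).
rewrite (eq_bigr (fun k => (-1) ^+ (d + q) * \prod_(i < d + q) (alpha i - beta k))); last first.
  move=> k _; rewrite f_at_beta -[X in (-1) ^+ X](card_ord (d + q)) -prodrN.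
  by apply: eq_bigr => i _; rewrite opprB.
rewrite big_split /= prodr_const card_setC_split -exprM /Rset exchange_big /=.
by congr (_ * _); apply: eq_bigl => i; rewrite in_setT.
Qed.

Lemma prod_beta_cross : \prod_(k in ~: J) \prod_(l in J) ((beta k)%:P - (beta l)%:P) =
  ((-1) ^+ (p * d) * Rset beta beta J (~: J))%:P.
Proof.
transitivity ((\prod_(k in ~: J) \prod_(l in J) (beta k - beta l))%:P).
  rewrite rmorph_prod; apply: eq_bigr => k _.
  by rewrite rmorph_prod; apply: eq_bigr => l _; rewrite rmorphB.
congr _%:P; rewrite exchange_big /=.
rewrite (eq_bigr (fun l => (-1) ^+ p * \prod_(k in ~: J) (beta l - beta k))) => [|l _].
  by rewrite big_split /= prodr_const cardJ -exprM.
rewrite -[X in (-1) ^+ X]card_setC_split -prodrN.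
by apply: eq_bigr => k _; rewrite opprB.
Qed.

Lemma det_beta_split_mx : \det (beta_split_mx J) =
  (-1) ^+ (p * d) * (-1) ^+ 'C(p, 2) * (Rset beta beta J (~: J))^-1%:P *
  vdm_prod (fun k => (beta k)%:P).
Proof.
set RJ := Rset beta beta J (~: J).
have cross_neq0 : ((-1) ^+ (p * d) * RJ)%:P != 0.
  by rewrite polyC_eq0 mulf_neq0 ?signr_eq0 ?Rset_beta_neq0.
have RJ_inv : RJ^-1%:P * RJ%:P = 1 by rewrite -rmorphM mulVf ?Rset_beta_neq0.
apply: (mulIf cross_neq0); rewrite -{1}prod_beta_cross.
rewrite (det_split_mx_powers (fun k => (beta k)%:P)) // rmorphM /= rmorph_sign.
set vdm := vdm_prod _; set sp := (-1) ^+ (p * d); set sc := (-1) ^+ 'C(p, 2).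
rewrite [RHS](_ : _ = sp * (sp * (sc * vdm)) * (RJ^-1%:P * RJ%:P)).
  by rewrite signrMK RJ_inv mulr1.
by clearbody sp sc; ring.
Qed.

Lemma root_coord_term :
  (\prod_(k in J) ((beta k)%:P - 'X)) * (\prod_(k in ~: J) (f.[beta k])%:P) *
    \det (beta_split_mx J) =
  (-1) ^+ (d + (d + q) * p + p * d + 'C(p, 2)) *
    ((Rset alpha beta setT (~: J) / Rset beta beta J (~: J)) *: Rx beta J *
     vdm_prod (fun k => (beta k)%:P)).
Proof.
rewrite prod_beta_subX prod_f_at_beta det_beta_split_mx -mul_polyC !rmorphM /=.
rewrite !rmorph_sign !exprD.
move: ((-1) ^+ d) ((-1) ^+ ((d + q) * p)) ((-1) ^+ (p * d)) ((-1) ^+ 'C(p, 2)).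
by move=> s1 s2 s3 s4; ring.
Qed.

End ComplementOfSizeD.

Lemma Syl0_eq_Sres : Syl alpha beta 0 d = Sres d f g.
Proof.
apply: (mulIf vdm_beta_neq0).
have := det_linear_rows_cross size_sres_rowpoly sres_coord_linear root_coord_linear.
rewrite det_sres_coord_rows det_root_coord_monomials det_root_coord_rows.
rewrite det_sres_coord_monomials det_root_coord_rows_expand => ->.
rewrite Syl0E !mulr_suml; apply: eq_bigr => J /eqP cardJ.
rewrite root_coord_term //; move: (_ * vdm_prod _) => Y.
rewrite -!mulrA mulrCA -!exprD -signr_odd.
by rewrite (negbTE (sres_sign_odd d p q)) mulr1.
Qed.

End SubresultantAsSylvesterSum.

Theorem proposition2p9 (K : fieldType) (m n : nat)
  (alpha : 'I_m -> K) (beta : 'I_n -> K)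
  (inj_alpha : injective alpha) (inj_beta : injective beta)
  (d : nat) (hdn : (d <= n - 1)%N) (hdm : (d <= m)%N) (hn : (0 < n)%N) :
  Syl alpha beta 0 d =
  Sres d (\prod_(i < m) ('X - (alpha i)%:P)) (\prod_(j < n) ('X - (beta j)%:P)).
Proof.
have [p En] : exists p, n = (d + p)%N by exists (n - d)%N; lia.
have [q Em] : exists q, m = (d + q)%N by exists (m - d)%N; lia.
subst n m; apply: Syl0_eq_Sres inj_beta; lia.
Qed.
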